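(* Let $M_t=(\mathcal S,\mathcal A,\bar r_t,p_t,s_1)$, $t=1,\dots,T$, be time-homogeneous communicating MDPs on common finite state and action sets, each with diameter at most $D$. Define $V_T=\sum_{t=1}^{T-1}|\rho^*(M_{t+1})-\rho^*(M_t)|$, $V^r_T=\sum_{t=1}^{T-1}\max_{s,a}|\bar r_{t+1}(s,a)-\bar r_t(s,a)|$ and $V^p_T=\sum_{t=1}^{T-1}\max_{s,a}\|p_{t+1}(\cdot\mid s,a)-p_t(\cdot\mid s,a)\|_1$. Then \[V_T\le V^r_T+D\,V^p_T.\]
   Context: A (time-homogeneous) MDP $M=(\mathcal S,\mathcal A,\bar r,p,s_1)$ has mean rewards $\bar r(s,a)\in[0,1]$ and transition probabilities $p(\cdot\mid s,a)$. It is communicating if for any two states $s,s'$, starting in $s$ one can reach $s'$ with positive probability by choosing appropriate actions. Its diameter is $\max_{s\ne s'}\min_\pi\mathbb E[T(s'\mid s,\pi)]$, where $T(s'\mid s,\pi)$ is the first time $s'$ is reached when starting in $s$ and following the stationary policy $\pi:\mathcal S\to\mathcal A$. The average reward of a stationary policy is $\rho(M,\pi)=\lim_{n\to\infty}\frac1n\mathbb E[\sum_{t=1}^n r_t]$ and $\rho^*(M)=\max_\pi\rho(M,\pi)$. *)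

From HB Require Import structures.
From mathcomp Require Import all_boot all_order all_algebra.
From mathcomp Require Import all_classical all_reals all_analysis.
Set Implicit Arguments. Unset Strict Implicit. Unset Printing Implicit Defensive.
Import Order.TTheory GRing.Theory Num.Theory numFieldNormedType.Exports.
Local Open Scope ring_scope.

(* A time-homogeneous MDP on finite state set S and action set A
   (the initial state s_1 is passed separately, it is common to all M_t). *)
Record mdp (R : realType) (S A : finType) := MDP {
  rbar : S -> A -> R;
  ptr  : S -> A -> S -> R        (* ptr s a s' = p(s' | s, a) *)
}.

Section MDP.
Variables (R : realType) (S A : finType).
Implicit Types (M : mdp R S A) (pi : S -> A).

Definition mdp_valid M :=
  (forall s a, 0 <= rbar M s a <= 1) /\
  (forall s a s', 0 <= ptr M s a s') /\
  (forall s a, \sum_(s' : S) ptr M s a s' = 1).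

Definition communicating M :=
  forall s s' : S, connect (fun x y => [exists a : A, 0 < ptr M x a y]) s s'.

Fixpoint Pn M pi (n : nat) (s s' : S) : R :=
  match n with
  | 0 => (s == s')%:R
  | n'.+1 => \sum_(u : S) Pn M pi n' s u * ptr M u (pi u) s'
  end.

(* E[r_t] for t = n.+1, starting in s1 *)
Definition exp_reward M pi (s1 : S) (n : nat) : R :=
  \sum_(s : S) Pn M pi n s1 s * rbar M s (pi s).

Definition avg_reward M pi (s1 : S) : R :=
  limn (fun n : nat => n%:R^-1 * \sum_(t < n) exp_reward M pi s1 t).

(* rho^*(M) = max over stationary policies (values are >= 0 since rewards in [0,1]) *)
Definition opt_avg_reward M (s1 : S) : R :=
  \big[Num.max/0]_(pi : {ffun S -> A}) avg_reward M pi s1.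

(* Qn n s u = P(s_{n+1} = u and s' not visited at times 2..n+1 | s_1 = s) *)
Fixpoint avoid M pi (s' : S) (n : nat) (s u : S) : R :=
  match n with
  | 0 => (s == u)%:R
  | n'.+1 => if u == s' then 0
             else \sum_(w : S) avoid M pi s' n' s w * ptr M w (pi w) u
  end.

(* E[T(s'|s,pi)] = sum_{n>=0} P(T > n), in extended reals *)
Definition exp_hitting_time M pi (s s' : S) : \bar R :=
  (\sum_(n <oo) (\sum_(u : S) avoid M pi s' n s u)%:E)%E.

Definition diameter M : \bar R :=
  \big[Order.max/-oo%E]_(s : S) \big[Order.max/-oo%E]_(s' : S | s' != s)
     \big[Order.min/+oo%E]_(pi : {ffun S -> A}) exp_hitting_time M pi s s'.

End MDP.

Definition var_opt (R : realType) (S A : finType) (M : nat -> mdp R S A)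
  (s1 : S) (T : nat) : R :=
  \sum_(1 <= t < T) `|opt_avg_reward (M t.+1) s1 - opt_avg_reward (M t) s1|.

Definition var_reward (R : realType) (S A : finType) (M : nat -> mdp R S A)
  (T : nat) : R :=
  \sum_(1 <= t < T) \big[Num.max/0]_(s : S) \big[Num.max/0]_(a : A)
      `|rbar (M t.+1) s a - rbar (M t) s a|.

Definition var_trans (R : realType) (S A : finType) (M : nat -> mdp R S A)
  (T : nat) : R :=
  \sum_(1 <= t < T) \big[Num.max/0]_(s : S) \big[Num.max/0]_(a : A)
      \sum_(s' : S) `|ptr (M t.+1) s a s' - ptr (M t) s a s'|.

(* It suffices to compare two MDPs M, M' with diam M <= D:
   rho*(M') <= rho*(M) + max |r' - r| + D max |p' - p|_1.
   For a discount factor lam < 1, the optimal discounted value v of M (the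
   Banach fixed point of the Bellman operator) lies in [0, 1/(1 - lam)] and has
   span at most D: if s' is reached from s in expected time E[T] <= D, then
   v s' - v s <= (1 - E[lam ^ T]) v s' <= (1 - lam) E[T] v s' <= D.
   Using v as a bias, the greedy policy of M gains (1 - lam) v s1 up to
   (1 - lam) D, while in M' the one-step error of r + P v is at most
   max |r' - r| + span(v) max |p' - p|_1, so every policy of M' gains at most
   that much more. As there are finitely many policies, one of them is greedy
   for discount factors arbitrarily close to 1; its Cesaro averages then form a
   Cauchy sequence, and letting lam -> 1 gives the comparison. *)

From HB Require Import structures.
From mathcomp Require Import all_boot all_order all_algebra.
From mathcomp Require Import all_classical all_reals all_analysis.
From mathcomp Require Import ring lra.
Import Order.TTheory GRing.Theory Num.Theory numFieldNormedType.Exports.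
Local Open Scope classical_set_scope.
Local Open Scope ring_scope.
Set Implicit Arguments. Unset Strict Implicit. Unset Printing Implicit Defensive.

Section DivNat.
Variable R : realType.
Implicit Types (u : nat -> R) (B c e x y : R).

Lemma near_div_natr_le B e : 0 < e -> \forall n \near \oo, B / n%:R <= e.
Proof.
move=> e0; have := archi_boundP (divr_ge0 (normr_ge0 B) (ltW e0)).
set k := Num.Def.archi_bound _ => kB; exists k.+1 => // n /= kn.
have n0 : (0 : R) < n%:R by rewrite ltr0n (leq_trans _ kn).
apply: le_trans (ler_norm _) _; rewrite normrM normfV normr_nat ler_pdivrMr //.
move: kB; rewrite ltr_pdivrMr // mulrC => /ltW /le_trans; apply.
by rewrite ler_wpM2l ?(ltW e0) // ler_nat ltnW.
Qed.

Lemma le_of_le_add_div x y B :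
  (forall n, (0 < n)%N -> x <= y + B / n%:R) -> x <= y.
Proof.
move=> xy; apply/ler_addgt0Pr => e e0.
have [N _ HN] := near_div_natr_le B e0.
by apply: le_trans (xy N.+1 isT) _; rewrite lerD2l; apply: HN => /=.
Qed.

Lemma limn_le_of_le_add_div u c B : 0 <= c ->
  (forall n, (0 < n)%N -> u n <= c + B / n%:R) -> limn u <= c.
Proof.
move=> c0 uc; have [cu|/dvgP ->//] := pselect (cvgn u).
apply/ler_addgt0Pr => e e0; apply: limr_le => //.
near=> n; apply: le_trans (uc n _) _; first by near: n; exists 1%N.
by rewrite lerD2l; near: n; exact: near_div_natr_le.
Unshelve. all: by end_near. Qed.

Lemma limn_ge_of_ge_sub_div u c B : cvgn u ->
  (forall n, (0 < n)%N -> c - B / n%:R <= u n) -> c <= limn u.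
Proof.
move=> cu uc; apply/ler_addgt0Pr => e e0; rewrite -lerBlDr; apply: limr_ge => //.
near=> n; apply: le_trans (uc n _); last by near: n; exists 1%N.
by rewrite lerD2l lerN2; near: n; exact: near_div_natr_le.
Unshelve. all: by end_near. Qed.

Lemma cvgn_of_approx u B :
  (forall e, 0 < e -> exists c, forall n, (0 < n)%N -> `|u n - c| <= e + B / n%:R) ->
  cvgn u.
Proof.
move=> uB; apply/cauchy_cvgP/cauchy_exP => e e0.
have e4 : 0 < e / 4 by rewrite divr_gt0.
have [c uc] := uB _ e4; have [N _ BN] := near_div_natr_le B e4.
exists c, N.+1 => // n /= Nn; rewrite -ball_normE /= distrC.
have := uc n (leq_ltn_trans (leq0n N) Nn); have := BN n (ltnW Nn); lra.
Qed.

End DivNat.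

(* Redeclaring completeness lets HB build the missing complete normed module
   structure on row vectors, which the Banach fixed point theorem needs. *)
HB.instance Definition _ (R : realType) (n : nat) :=
  Uniform_isComplete.Build 'rV[R]_n cauchy_cvg.

Section RowNorm.
Variables (R : realType) (n : nat).
Implicit Type x : 'rV[R]_n.

Lemma rV_norm_ge x i : `|x ord0 i| <= `|x|.
Proof.
rewrite [leRHS]/Num.norm /= mx_normrE.
exact: (le_bigmax _ (fun ij => `|x ij.1 ij.2|) (ord0, i)).
Qed.

Lemma rV_norm_le x e : 0 <= e -> (forall i, `|x ord0 i| <= e) -> `|x| <= e.
Proof.
move=> e0 xe; rewrite [leLHS]/Num.norm /= mx_normrE; apply/bigmax_leP; split=> // -[i j] _.
by rewrite [i]ord1; exact: xe.
Qed.

End RowNorm.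

Definition next_mean (R : realType) (S A : finType) (M : mdp R S A)
    (s : S) (a : A) (h : S -> R) : R :=
  \sum_(s' : S) ptr M s a s' * h s'.

Definition span_le (R : realType) (S : finType) (h : S -> R) (D : R) :=
  forall s s' : S, h s' - h s <= D.

Definition cesaro_reward (R : realType) (S A : finType) (M : mdp R S A)
    (pi : S -> A) (s1 : S) (n : nat) : R :=
  n%:R^-1 * \sum_(t < n) exp_reward M pi s1 t.

Lemma avg_rewardE (R : realType) (S A : finType) (M : mdp R S A) pi s1 :
  avg_reward M pi s1 = limn (cesaro_reward M pi s1).
Proof. by []. Qed.

Lemma span_le_norm (R : realType) (S : finType) (h : S -> R) D :
  span_le h D -> forall s s', `|h s' - h s| <= D.
Proof. by move=> hD s s'; rewrite ler_norml hD andbT lerNl opprB hD. Qed.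

Section PolicyEvaluation.
Variables (R : realType) (S A : finType) (M : mdp R S A).
Hypothesis MV : mdp_valid M.

Lemma next_mean_le s a h b : (forall s', h s' <= b) -> next_mean M s a h <= b.
Proof.
case: MV => _ [p0 p1] hb; rewrite -[b]mul1r -(p1 s a) mulr_suml.
by apply: ler_sum => s' _; rewrite ler_wpM2l.
Qed.

Lemma next_mean_ge s a h b : (forall s', b <= h s') -> b <= next_mean M s a h.
Proof.
case: MV => _ [p0 p1] hb; rewrite -[b]mul1r -(p1 s a) mulr_suml.
by apply: ler_sum => s' _; rewrite ler_wpM2l.
Qed.

Variables (pi : S -> A) (s1 : S).

Lemma Pn_ge0 n s s' : 0 <= Pn M pi n s s'.
Proof.
case: MV => _ [p0 _].
elim: n s' => [|n IH] s' /=; first by rewrite ler0n.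
by apply: sumr_ge0 => u _; apply: mulr_ge0.
Qed.

Lemma sum_Pn n s : \sum_(s' : S) Pn M pi n s s' = 1.
Proof.
case: MV => _ [_ p1].
elim: n => [|n IH] /=.
  by rewrite (bigD1 s) //= eqxx big1 ?addr0 // => s' /negbTE; rewrite eq_sym => ->.
by rewrite exchange_big -IH; apply: eq_bigr => u _; rewrite -mulr_sumr p1 mulr1.
Qed.

Definition state_mean n (h : S -> R) : R := \sum_(s : S) Pn M pi n s1 s * h s.

Lemma state_mean0 h : state_mean 0 h = h s1.
Proof.
rewrite /state_mean (bigD1 s1) //= eqxx mul1r big1 ?addr0 // => s /negbTE.
by rewrite eq_sym => ->; rewrite mul0r.
Qed.

Lemma state_meanS n h :
  state_mean n.+1 h = state_mean n (fun s => next_mean M s (pi s) h).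
Proof.
rewrite /state_mean /next_mean /=; under eq_bigr do rewrite mulr_suml.
rewrite exchange_big; apply: eq_bigr => s _.
by rewrite mulr_sumr; apply: eq_bigr => s' _; rewrite mulrA.
Qed.

Lemma state_mean_le n h b : (forall s, h s <= b) -> state_mean n h <= b.
Proof.
move=> hb; rewrite -[b]mul1r -(sum_Pn n s1) mulr_suml.
by apply: ler_sum => s _; rewrite ler_wpM2l ?Pn_ge0.
Qed.

Lemma state_mean_ge n h b : (forall s, b <= h s) -> b <= state_mean n h.
Proof.
move=> hb; rewrite -[b]mul1r -(sum_Pn n s1) mulr_suml.
by apply: ler_sum => s _; rewrite ler_wpM2l ?Pn_ge0.
Qed.

Definition poisson_gap (h : S -> R) (s : S) : R :=
  rbar M s (pi s) + next_mean M s (pi s) h - h s.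

Lemma sum_exp_reward_gap h n :
  \sum_(t < n) exp_reward M pi s1 t =
  \sum_(t < n) state_mean t (poisson_gap h) + (h s1 - state_mean n h).
Proof.
elim: n => [|n IH]; first by rewrite !big_ord0 state_mean0 subrr addr0.
rewrite !big_ord_recr /= IH state_meanS.
have -> : state_mean n (poisson_gap h) = exp_reward M pi s1 n
    + state_mean n (fun s => next_mean M s (pi s) h) - state_mean n h.
  rewrite /state_mean /exp_reward -big_split -sumrB.
  by apply: eq_bigr => s _ /=; rewrite /poisson_gap; ring.
ring.
Qed.

Lemma cesaro_reward_le h b D n : span_le h D ->
  (forall s, poisson_gap h s <= b) -> (0 < n)%N ->
  cesaro_reward M pi s1 n <= b + D / n%:R.
Proof.
move=> hD hb n0.
have -> : b + D / n%:R = n%:R^-1 * (b *+ n + D).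
  by rewrite -mulr_natr; field; rewrite pnatr_eq0 -lt0n.
rewrite /cesaro_reward (sum_exp_reward_gap h n) ler_wpM2l ?invr_ge0 ?ler0n //.
apply: lerD; last first.
  suff : h s1 - D <= state_mean n h by lra.
  by apply: state_mean_ge => s; have := hD s s1; lra.
rewrite -[n in b *+ n]card_ord -sumr_const.
by apply: ler_sum => t _; exact: state_mean_le.
Qed.

Lemma cesaro_reward_ge h b D n : span_le h D ->
  (forall s, b <= poisson_gap h s) -> (0 < n)%N ->
  b - D / n%:R <= cesaro_reward M pi s1 n.
Proof.
move=> hD hb n0.
have -> : b - D / n%:R = n%:R^-1 * (b *+ n - D).
  by rewrite -mulr_natr; field; rewrite pnatr_eq0 -lt0n.
rewrite /cesaro_reward (sum_exp_reward_gap h n) ler_wpM2l ?invr_ge0 ?ler0n //.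
apply: lerD; last first.
  suff : state_mean n h <= h s1 + D by lra.
  by apply: state_mean_le => s; have := hD s1 s; lra.
rewrite -[n in b *+ n]card_ord -sumr_const.
by apply: ler_sum => t _; exact: state_mean_ge.
Qed.

End PolicyEvaluation.

Section Bellman.
Variables (R : realType) (S A : finType) (M : mdp R S A).
Hypothesis MV : mdp_valid M.
Variable lam : R.
Hypotheses (lam_ge0 : 0 <= lam) (lam_lt1 : lam < 1).

Definition qvalue (v : S -> R) (s : S) (a : A) : R :=
  rbar M s a + lam * next_mean M s a v.

Definition discount_optimal (v : S -> R) (pi : S -> A) :=
  (forall s a, qvalue v s a <= v s) /\ (forall s, qvalue v s (pi s) = v s).

Lemma next_meanB s a (v w : S -> R) :
  next_mean M s a (fun s' => v s' - w s') = next_mean M s a v - next_mean M s a w.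
Proof. by rewrite /next_mean -sumrB; apply: eq_bigr => s' _; rewrite mulrBr. Qed.

Lemma next_mean_dist s a (v w : S -> R) e : (forall s', `|v s' - w s'| <= e) ->
  `|next_mean M s a v - next_mean M s a w| <= e.
Proof.
move=> vw; rewrite -next_meanB ler_norml.
by rewrite next_mean_ge ?next_mean_le // => s'; have := vw s'; rewrite ler_norml => /andP[].
Qed.

Variable a0 : A.

Definition greedy (v : S -> R) (s : S) : A := [arg max_(a > a0) qvalue v s a]%O.

Definition bellman (v : S -> R) (s : S) : R := qvalue v s (greedy v s).

Lemma qvalue_le_bellman v s a : qvalue v s a <= bellman v s.
Proof. by rewrite /bellman /greedy; case: arg_maxP => // b _; apply. Qed.

Lemma bellman_dist (v w : S -> R) e : (forall s, `|v s - w s| <= e) ->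
  forall s, `|bellman v s - bellman w s| <= lam * e.
Proof.
have le_shift (v' w' : S -> R) s : (forall s, `|v' s - w' s| <= e) ->
    bellman v' s <= bellman w' s + lam * e.
  move=> vw; apply: le_trans (lerD (qvalue_le_bellman w' s (greedy v' s)) (lexx _)).
  rewrite /bellman /qvalue -addrA lerD2l -mulrDr ler_wpM2l //.
  by have := next_mean_dist s (greedy v' s) vw; rewrite ler_norml lerBlDl addrC => /andP[].
move=> vw s; have := le_shift v w s vw.
have : bellman w s <= bellman v s + lam * e by apply: le_shift => s'; rewrite distrC.
by rewrite ler_norml; lra.
Qed.

Let K := (1 - lam)^-1.

Lemma bellman_box v s : (forall s, 0 <= v s <= K) -> 0 <= bellman v s <= K.
Proof.
case: MV => rb _ vK; apply/andP; split.
  apply: le_trans (qvalue_le_bellman v s a0); rewrite /qvalue addr_ge0 //.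
    by case/andP: (rb s a0).
  by rewrite mulr_ge0 // next_mean_ge // => s'; case/andP: (vK s').
rewrite /bellman /qvalue.
have -> : K = 1 + lam * K by rewrite /K; field; rewrite subr_eq0 gt_eqF.
apply: lerD; first by case/andP: (rb s (greedy v s)).
by rewrite ler_wpM2l // next_mean_le // => s'; case/andP: (vK s').
Qed.

Lemma bellman_fixpoint : exists v : S -> R,
  (forall s, 0 <= v s <= K) /\ forall s, bellman v s = v s.
Proof.
pose fun_of_row (x : 'rV[R]_#|S|) (s : S) : R := x ord0 (enum_rank s).
pose bellman_row (x : 'rV[R]_#|S|) : 'rV[R]_#|S| :=
  \row_i bellman (fun_of_row x) (enum_val i).
pose box := [set x : 'rV[R]_#|S| | forall i, `[0, K]%classic (x ord0 i)].
have boxE x : box x <-> forall s, 0 <= fun_of_row x s <= K.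
  split=> [xb s|xb i]; first by have := xb (enum_rank s); rewrite /= in_itv.
  by rewrite /= in_itv -[i]enum_valK; exact: xb.
have box_bellman : {homo bellman_row : x / box x >-> box x}.
  move=> x /boxE xb; apply/boxE => s.
  by rewrite /fun_of_row mxE enum_rankK; exact: bellman_box.
have contr : is_contraction (mkfun_fun box_bellman).
  exists (NngNum lam_ge0); split=> // -[x y] _ /=.
  apply: rV_norm_le => [|i]; first by rewrite mulr_ge0.
  rewrite !mxE; apply: bellman_dist => s.
  by have := rV_norm_ge (x - y) (enum_rank s); rewrite !mxE.
have box_closed : closed box.
  apply: compact_closed; first exact: norm_hausdorff.
  by apply: (@rV_compact _ _ (fun=> `[0, K]%classic)) => i; exact: segment_compact.
have box0 : box 0 by move=> i; rewrite /= mxE in_itv /= lexx invr_ge0 subr_ge0 ltW.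
have [p pb pfix] := banach_fixed_point contr box_closed (ex_intro _ 0 box0).
exists (fun_of_row p); split; first exact/boxE.
by move=> s; rewrite {2}pfix /= /mkfun /fun_of_row mxE enum_rankK.
Qed.

Lemma discount_optimal_exists : exists (v : S -> R) (pi : {ffun S -> A}),
  (forall s, 0 <= v s <= K) /\ discount_optimal v pi.
Proof.
have [v [vK vfix]] := bellman_fixpoint.
exists v, [ffun s => greedy v s]; split=> //; split=> [s a|s].
  by rewrite -vfix qvalue_le_bellman.
by rewrite ffunE -vfix.
Qed.

End Bellman.

Section HittingTime.
Variables (R : realType) (S A : finType) (M : mdp R S A).
Hypothesis MV : mdp_valid M.
Variables (sg : S -> A) (s s' : S).

Lemma avoid_ge0 n u : 0 <= avoid M sg s' n s u.
Proof.
case: MV => _ [p0 _]; elim: n u => [|n IH] u /=; first by rewrite ler0n.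
by case: ifP => // _; apply: sumr_ge0 => w _; exact: mulr_ge0.
Qed.

(* With [T] the hitting time of [s'] from [s] under [sg], [survival n] is
   P(T > n) and [first_hit n] is P(T = n + 1). *)
Definition survival n := \sum_(u : S) avoid M sg s' n s u.

Definition first_hit n := \sum_(u : S) avoid M sg s' n s u * ptr M u (sg u) s'.

Lemma survival0 : survival 0 = 1.
Proof.
rewrite /survival (bigD1 s) //= eqxx big1 ?addr0 // => u /negbTE.
by rewrite eq_sym => ->.
Qed.

Lemma survival_ge0 n : 0 <= survival n.
Proof. by apply: sumr_ge0 => u _; exact: avoid_ge0. Qed.

Lemma first_hit_ge0 n : 0 <= first_hit n.
Proof. case: MV => _ [p0 _]; apply: sumr_ge0 => u _; exact: mulr_ge0 (avoid_ge0 _ _) _. Qed.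

Lemma avoid_step_mean n (f : S -> R) :
  \sum_(w : S) avoid M sg s' n.+1 s w * f w + first_hit n * f s' =
  \sum_(u : S) avoid M sg s' n s u * next_mean M u (sg u) f.
Proof.
rewrite /first_hit /next_mean; under [RHS]eq_bigr do rewrite mulr_sumr.
rewrite exchange_big (bigD1 s') //= [in RHS](bigD1 s') //= eqxx mul0r add0r addrC.
congr (_ + _); last by rewrite mulr_suml; apply: eq_bigr => u _; rewrite mulrA.
apply: eq_bigr => w /negbTE ->; rewrite mulr_suml.
by apply: eq_bigr => u _; rewrite mulrA.
Qed.

Lemma survivalS n : survival n.+1 = survival n - first_hit n.
Proof.
case: MV => _ [_ p1]; apply/eqP; rewrite eq_sym subr_eq.
have := avoid_step_mean n (fun=> 1); rewrite mulr1; under eq_bigr do rewrite mulr1.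
move=> ->; apply/eqP; apply: eq_bigr => u _.
by rewrite /next_mean; under eq_bigr do rewrite mulr1; rewrite p1 mulr1.
Qed.

Lemma survival_nonincr m n : (m <= n)%N -> survival n <= survival m.
Proof.
elim: n => [|n IH]; first by rewrite leqn0 => /eqP ->.
rewrite leq_eqVlt => /orP[/eqP -> //|/IH]; apply: le_trans.
by rewrite survivalS lerBlDr lerDl first_hit_ge0.
Qed.

Variable D : R.
Hypothesis hit_le : (exp_hitting_time M sg s s' <= D%:E)%E.

Lemma sum_survival_le n : \sum_(k < n) survival k <= D.
Proof.
have := @nneseries_lim_ge R (fun k => (survival k)%:E) xpredT 0%N n
  (fun k _ _ => survival_ge0 k).
by rewrite sumEFin => /le_trans /(_ hit_le); rewrite big_mkord -lee_fin.
Qed.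

Lemma survival_le_div n : (0 < n)%N -> survival n <= D / n%:R.
Proof.
move=> n0; rewrite ler_pdivlMr ?ltr0n // mulr_natr -[n in _ *+ n]card_ord -sumr_const.
apply: le_trans (sum_survival_le n); apply: ler_sum => k _.
exact: survival_nonincr (ltnW (ltn_ord k)).
Qed.

Lemma one_le_hitting_bound : 1 <= D.
Proof. by have := sum_survival_le 1; rewrite big_ord1 survival0. Qed.

Variable lam : R.
Hypotheses (lam_ge0 : 0 <= lam) (lam_le1 : lam <= 1).

(* E[lam ^ T; T <= n] *)
Definition hit_discount n := \sum_(k < n) lam ^+ k.+1 * first_hit k.

Lemma one_sub_hit_discount n : 1 - hit_discount n =
  (1 - lam) * \sum_(k < n) lam ^+ k * survival k + lam ^+ n * survival n.
Proof.
elim: n => [|n IH].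
  by rewrite /hit_discount !big_ord0 subr0 mulr0 add0r expr0 mul1r survival0.
rewrite /hit_discount !big_ord_recr /= opprD addrA IH survivalS exprS; ring.
Qed.

Lemma one_sub_hit_discount_le n : (0 < n)%N ->
  1 - hit_discount n <= (1 - lam) * D + D / n%:R.
Proof.
move=> n0; rewrite one_sub_hit_discount; apply: lerD.
  rewrite ler_wpM2l ?subr_ge0 //; apply: le_trans (sum_survival_le n).
  by apply: ler_sum => k _; rewrite ler_piMl ?survival_ge0 ?exprn_ile1.
apply: le_trans (survival_le_div n0).
by rewrite ler_piMl ?survival_ge0 ?exprn_ile1.
Qed.

Variable v : S -> R.
Hypotheses (v_ge0 : forall u, 0 <= v u)
  (v_excessive : forall u, lam * next_mean M u (sg u) v <= v u).

Definition avoid_mean n := \sum_(u : S) avoid M sg s' n s u * v u.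

Lemma avoid_mean_ge0 n : 0 <= avoid_mean n.
Proof. by apply: sumr_ge0 => u _; rewrite mulr_ge0 ?avoid_ge0. Qed.

Lemma avoid_mean_step n : lam * (avoid_mean n.+1 + first_hit n * v s') <= avoid_mean n.
Proof.
rewrite avoid_step_mean mulr_sumr; apply: ler_sum => u _.
by rewrite mulrCA ler_wpM2l ?avoid_ge0.
Qed.

Lemma hit_discount_le n : lam ^+ n * avoid_mean n + hit_discount n * v s' <= v s.
Proof.
elim: n => [|n IH].
  rewrite /avoid_mean /hit_discount big_ord0 mul0r addr0 expr0 mul1r (bigD1 s) //=.
  by rewrite eqxx mul1r big1 ?addr0 // => u /negbTE; rewrite eq_sym => ->; rewrite mul0r.
apply: le_trans IH; rewrite /hit_discount big_ord_recr /= -/(hit_discount n).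
have := ler_wpM2l (exprn_ge0 n lam_ge0) (avoid_mean_step n).
rewrite !exprS; set X := lam ^+ n; lra.
Qed.

Lemma hit_discount_gap n : v s' - v s <= (1 - hit_discount n) * v s'.
Proof.
have := hit_discount_le n.
have := mulr_ge0 (exprn_ge0 n lam_ge0) (avoid_mean_ge0 n); lra.
Qed.

End HittingTime.

Section DiscountedSpan.
Variables (R : realType) (S A : finType) (M : mdp R S A).
Hypothesis MV : mdp_valid M.
Variable D : R.
Hypothesis diamD : (diameter M <= D%:E)%E.

Lemma diameter_hitting s s' : s' != s ->
  exists sg : {ffun S -> A}, (exp_hitting_time M sg s s' <= D%:E)%E.
Proof.
move=> s's; apply/not_existsP => hit_gt.
have : (\big[Order.min/+oo%E]_(pi : {ffun S -> A}) exp_hitting_time M pi s s' <= D%:E)%E.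
  apply: le_trans diamD; apply: le_trans (le_bigmax _ _ s).
  by rewrite (bigD1 s') //= le_max lexx.
apply/negP; rewrite -ltNge.
apply: (big_ind (fun x => D%:E < x)%E) => [|x y|pi _]; first by rewrite ltry.
  by rewrite lt_min => ->.
by rewrite ltNge; apply/negP; exact: hit_gt.
Qed.

Lemma discount_optimal_span lam (v : S -> R) (pi : S -> A) :
  0 <= lam < 1 -> 0 <= D -> (forall s, 0 <= v s <= (1 - lam)^-1) ->
  discount_optimal M lam v pi -> span_le v D.
Proof.
case/andP=> lam0 lam1 D0 vK [vopt _] s s'.
have [->|s's] := eqVneq s' s; first by rewrite subrr.
have [sg hitD] := diameter_hitting s's.
have excessive u : lam * next_mean M u (sg u) v <= v u.
  apply: le_trans (vopt u (sg u)); rewrite lerDr.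
  by case: MV => rb _; case/andP: (rb u (sg u)).
have v0 u : 0 <= v u by case/andP: (vK u).
apply: (le_of_le_add_div (B := (1 - lam)^-1 * D)) => n n0.
apply: le_trans (hit_discount_gap MV s s' lam0 v0 excessive n) _.
have hd := one_sub_hit_discount_le MV hitD lam0 (ltW lam1) n0.
apply: le_trans (ler_wpM2r (v0 s') hd) _.
apply: le_trans (_ : _ <= ((1 - lam) * D + D / n%:R) * (1 - lam)^-1) _.
  apply: ler_wpM2l; last by case/andP: (vK s').
  by rewrite addr_ge0 ?divr_ge0 // mulr_ge0 // subr_ge0 ltW.
rewrite le_eqVlt; apply/orP; left; apply/eqP; field.
by rewrite pnatr_eq0 -lt0n n0 subr_eq0 gt_eqF.
Qed.

End DiscountedSpan.

Section MdpDistance.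
Variables (R : realType) (S A : finType).
Implicit Types M : mdp R S A.

Definition reward_dist M1 M2 : R :=
  \big[Num.max/0]_(s : S) \big[Num.max/0]_(a : A) `|rbar M1 s a - rbar M2 s a|.

Definition trans_dist M1 M2 : R :=
  \big[Num.max/0]_(s : S) \big[Num.max/0]_(a : A)
    \sum_(s' : S) `|ptr M1 s a s' - ptr M2 s a s'|.

Lemma reward_dist_ge M1 M2 s a : `|rbar M1 s a - rbar M2 s a| <= reward_dist M1 M2.
Proof.
exact: le_trans (le_bigmax _ (fun a => `|rbar M1 s a - rbar M2 s a|) a) (le_bigmax _ _ s).
Qed.

Lemma trans_dist_ge M1 M2 s a :
  \sum_(s' : S) `|ptr M1 s a s' - ptr M2 s a s'| <= trans_dist M1 M2.
Proof.
exact: le_trans (le_bigmax _ (fun a => \sum_(s' : S) `|ptr M1 s a s' - ptr M2 s a s'|) a)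
  (le_bigmax _ _ s).
Qed.

Lemma reward_dist_ge0 M1 M2 : 0 <= reward_dist M1 M2.
Proof. exact: bigmax_ge_id. Qed.

Lemma trans_dist_ge0 M1 M2 : 0 <= trans_dist M1 M2.
Proof. exact: bigmax_ge_id. Qed.

Lemma reward_distC M1 M2 : reward_dist M1 M2 = reward_dist M2 M1.
Proof. by apply: eq_bigr => s _; apply: eq_bigr => a _; rewrite distrC. Qed.

Lemma trans_distC M1 M2 : trans_dist M1 M2 = trans_dist M2 M1.
Proof.
by apply: eq_bigr => s _; apply: eq_bigr => a _; apply: eq_bigr => s' _; rewrite distrC.
Qed.

Lemma trans_dist_subsingleton M1 M2 : mdp_valid M1 -> mdp_valid M2 ->
  (forall s s' : S, s = s') -> trans_dist M1 M2 = 0.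
Proof.
have ptr1 M s a s' : mdp_valid M -> (forall s s' : S, s = s') -> ptr M s a s' = 1.
  case=> _ [_ p1] S1; rewrite -(p1 s a) (bigD1 s') //= big1 ?addr0 // => u.
  by rewrite (S1 u s') eqxx.
move=> MV1 MV2 S1; apply/eqP; rewrite eq_le trans_dist_ge0 andbT.
apply/bigmax_leP; split=> // s _; apply/bigmax_leP; split=> // a _.
by rewrite big1 // => s' _; rewrite !ptr1 // subrr normr0.
Qed.

End MdpDistance.

Lemma finite_recurrent (T : finType) (f : nat -> T) :
  exists t, forall N, exists2 k, (N <= k)%N & f k = t.
Proof.
apply: contrapT => none.
suff /choice [N fN] : forall t, exists N, forall k, (N <= k)%N -> f k != t.
  by have := fN (f (\max_t N t)) _ (leq_bigmax _); rewrite eqxx.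
move=> t; apply: contrapT => recurrent; apply: none; exists t => N.
apply: contrapT => never; apply: recurrent; exists N => k Nk.
by apply/eqP => fk; apply: never; exists k.
Qed.

Section Comparison.
Variables (R : realType) (S A : finType) (M M' : mdp R S A).
Hypotheses (MV : mdp_valid M) (MV' : mdp_valid M').

Lemma next_mean_diff_le h D s a : span_le h D ->
  `|next_mean M' s a h - next_mean M s a h|
    <= D * \sum_(s' : S) `|ptr M' s a s' - ptr M s a s'|.
Proof.
move=> hD; have [[_ [_ p1]] [_ [_ p1']]] := (MV, MV').
have -> : next_mean M' s a h - next_mean M s a h =
    \sum_(s' : S) (ptr M' s a s' - ptr M s a s') * (h s' - h s).
  have const0 : \sum_(s' : S) (ptr M' s a s' - ptr M s a s') * h s = 0.
    by rewrite -mulr_suml sumrB p1 p1' subrr mul0r.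
  under [RHS]eq_bigr do rewrite mulrBr.
  rewrite sumrB const0 subr0 /next_mean -sumrB.
  by apply: eq_bigr => s' _; rewrite mulrBl.
rewrite mulr_sumr; apply: le_trans (ler_norm_sum _ _ _) _; apply: ler_sum => s' _.
by rewrite normrM mulrC ler_wpM2r // span_le_norm.
Qed.

Variables (s1 : S) (lam D : R) (v : S -> R) (pi : S -> A).
Hypotheses (lam01 : 0 <= lam < 1) (vspan : span_le v D)
  (vopt : discount_optimal M lam v pi).

Lemma next_mean_near s a : `|next_mean M s a v - v s1| <= D.
Proof.
have lo : v s1 - D <= next_mean M s a v.
  by apply: next_mean_ge => // s'; have := vspan s' s1; lra.
have hi : next_mean M s a v <= v s1 + D.
  by apply: next_mean_le => // s'; have := vspan s1 s'; lra.
by rewrite ler_norml; apply/andP; split; lra.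
Qed.

Lemma cesaro_greedy_near n : (0 < n)%N ->
  `|cesaro_reward M pi s1 n - (1 - lam) * v s1| <= (1 - lam) * D + D / n%:R.
Proof.
case/andP: lam01 => lam0 lam1 n0; have l0 : 0 <= 1 - lam by rewrite subr_ge0 ltW.
have gap s : `|poisson_gap M pi v s - (1 - lam) * v s1| <= (1 - lam) * D.
  have -> : poisson_gap M pi v s = (1 - lam) * next_mean M s (pi s) v.
    by rewrite /poisson_gap -(vopt.2 s) /qvalue; ring.
  by rewrite -mulrBr normrM (ger0_norm l0) ler_wpM2l // next_mean_near.
have gap_lo s : (1 - lam) * v s1 - (1 - lam) * D <= poisson_gap M pi v s.
  by have := gap s; rewrite ler_norml => /andP[]; lra.
have gap_hi s : poisson_gap M pi v s <= (1 - lam) * v s1 + (1 - lam) * D.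
  by have := gap s; rewrite ler_norml => /andP[]; lra.
have := cesaro_reward_le MV s1 vspan gap_hi n0.
have := cesaro_reward_ge MV s1 vspan gap_lo n0.
by rewrite ler_norml; lra.
Qed.

Lemma cesaro_perturbed_le (sg : S -> A) n : (0 < n)%N ->
  cesaro_reward M' sg s1 n <= (1 - lam) * v s1 + (1 - lam) * D
    + (reward_dist M' M + D * trans_dist M' M) + D / n%:R.
Proof.
case/andP: lam01 => lam0 lam1 n0; have l0 : 0 <= 1 - lam by rewrite subr_ge0 ltW.
have D0 : 0 <= D by have := vspan s1 s1; rewrite subrr.
apply: (cesaro_reward_le MV' s1 vspan _ n0) => s; rewrite /poisson_gap.
have := reward_dist_ge M' M s (sg s); have := next_mean_diff_le s (sg s) vspan.
have := ler_wpM2l D0 (trans_dist_ge M' M s (sg s)).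
have := vopt.1 s (sg s); rewrite /qvalue.
have := next_mean_near s (sg s).
rewrite !ler_norml => /andP[_ nm_hi] q_le tr_le /andP[_ d_hi] /andP[_ r_hi].
have := ler_wpM2l l0 nm_hi; lra.
Qed.

End Comparison.

Section VanishingDiscount.
Variables (R : realType) (S A : finType) (M : mdp R S A).
Hypothesis MV : mdp_valid M.
Variable D : R.
Hypotheses (D0 : 0 <= D) (diamD : (diameter M <= D%:E)%E).

Lemma vanishing_discount (a0 : A) : exists pi : {ffun S -> A}, forall e, 0 < e ->
  exists (lam : R) (v : S -> R), [/\ 0 <= lam < 1, (1 - lam) * D <= e, (forall s, 0 <= v s),
    span_le v D & discount_optimal M lam v pi].
Proof.
pose lam k : R := 1 - k.+1%:R^-1.
have lam01 k : 0 <= lam k < 1.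
  by rewrite /lam subr_ge0 invf_le1 ?ler1n ?ltr0n //= ltrBlDr ltrDl invr_gt0 ltr0n.
have /choice[VP optVP] k : exists vp : (S -> R) * {ffun S -> A},
    [/\ forall s, 0 <= vp.1 s, span_le vp.1 D & discount_optimal M (lam k) vp.1 vp.2].
  have [lam0 lam1] := andP (lam01 k).
  have [v [pi [vK vopt]]] := discount_optimal_exists MV lam0 lam1 a0.
  exists (v, pi); split=> // [s|]; first by case/andP: (vK s).
  exact: (discount_optimal_span MV diamD (lam01 k) D0 vK vopt).
have [pi recurrent] := finite_recurrent (fun k => (VP k).2).
exists pi => e e0; have [N _ DN] := near_div_natr_le D e0.
have [k Nk <-] := recurrent N; have [v0 vspan vopt] := optVP k.
exists (lam k), (VP k).1; split=> //.
by rewrite /lam opprB addrC subrK mulrC; apply: DN => /=; exact: leqW.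
Qed.

End VanishingDiscount.

Section OptimalGain.
Variables (R : realType) (S A : finType).
Implicit Type M : mdp R S A.

Lemma opt_avg_reward_ge0 M s1 : 0 <= opt_avg_reward M s1.
Proof. exact: bigmax_ge_id. Qed.

Lemma avg_reward_le_opt M (pi : {ffun S -> A}) s1 :
  avg_reward M pi s1 <= opt_avg_reward M s1.
Proof. exact: (le_bigmax _ (fun pi : {ffun S -> A} => avg_reward M pi s1)). Qed.

Lemma opt_avg_reward_le M s1 c : 0 <= c ->
  (forall pi : {ffun S -> A}, avg_reward M pi s1 <= c) -> opt_avg_reward M s1 <= c.
Proof. by move=> c0 avg_le; apply/bigmax_leP. Qed.

Lemma opt_avg_reward_perturb M M' (D : R) s1 :
  mdp_valid M -> mdp_valid M' -> 0 <= D -> (diameter M <= D%:E)%E ->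
  opt_avg_reward M' s1 <= opt_avg_reward M s1 + (reward_dist M' M + D * trans_dist M' M).
Proof.
move=> MV MV' D0 diamD; set dl := reward_dist M' M + D * trans_dist M' M.
have dl0 : 0 <= dl by rewrite addr_ge0 ?reward_dist_ge0 ?mulr_ge0 ?trans_dist_ge0.
have [[a0 _]|noA] := pselect (exists a : A, True); last first.
  apply: opt_avg_reward_le => [|pi]; first by rewrite addr_ge0 ?opt_avg_reward_ge0.
  by exfalso; apply: noA; exists (pi s1).
have [pi near1] := vanishing_discount MV D0 diamD a0.
have pi_cvg : cvgn (cesaro_reward M pi s1).
  apply: (cvgn_of_approx (B := D)) => e e0.
  have [lam [v [lam01 De _ vspan vopt]]] := near1 e e0.
  exists ((1 - lam) * v s1) => n n0.
  by apply: le_trans (cesaro_greedy_near MV s1 lam01 vspan vopt n0) _; rewrite lerD2r.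
apply/ler_addgt0Pr => e e0.
have e2 : 0 < e / 2 by rewrite divr_gt0.
have [lam [v [lam01 De v0 vspan vopt]]] := near1 _ e2.
have lo : (1 - lam) * v s1 - (1 - lam) * D <= opt_avg_reward M s1.
  apply: le_trans (avg_reward_le_opt M pi s1); rewrite avg_rewardE.
  apply: (limn_ge_of_ge_sub_div (B := D)) pi_cvg _ => n n0.
  have := cesaro_greedy_near MV s1 lam01 vspan vopt n0; rewrite ler_norml; lra.
have hi : opt_avg_reward M' s1 <= (1 - lam) * v s1 + (1 - lam) * D + dl.
  have [lam0 lam1] := andP lam01; have l0 : 0 <= 1 - lam by rewrite subr_ge0 ltW.
  have c0 : 0 <= (1 - lam) * v s1 + (1 - lam) * D + dl.
    by apply: addr_ge0 => //; apply: addr_ge0; apply: mulr_ge0.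
  apply: (opt_avg_reward_le c0) => sg; rewrite avg_rewardE.
  apply: (limn_le_of_le_add_div (B := D) c0) => n n0.
  exact: (cesaro_perturbed_le MV MV' s1 lam01 vspan vopt (fun_of_fin sg) n0).
lra.
Qed.

Lemma diameter_lt0_subsingleton M (D : R) : mdp_valid M ->
  (diameter M <= D%:E)%E -> D < 0 -> forall s s' : S, s = s'.
Proof.
move=> MV diamD D0 s s'; apply/eqP; rewrite eq_sym; apply: contraTT D0 => s's.
have [sg hitD] := diameter_hitting diamD s's; rewrite -leNgt.
exact: le_trans ler01 (one_le_hitting_bound MV hitD).
Qed.

Lemma opt_avg_reward_dist M M' (D : R) s1 :
  mdp_valid M -> mdp_valid M' ->
  (diameter M <= D%:E)%E -> (diameter M' <= D%:E)%E ->
  `|opt_avg_reward M' s1 - opt_avg_reward M s1|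
    <= reward_dist M' M + D * trans_dist M' M.
Proof.
move=> MV MV'; wlog D0 : D / 0 <= D => [wlog_D0 diamD diamD'|diamD diamD'].
  have [D0|Dlt0] := leP 0 D; first exact: wlog_D0.
  rewrite (trans_dist_subsingleton MV' MV (diameter_lt0_subsingleton MV diamD Dlt0)).
  rewrite mulr0 -(mul0r (trans_dist M' M)); apply: wlog_D0 => //.
    by apply: le_trans diamD _; rewrite lee_fin ltW.
  by apply: le_trans diamD' _; rewrite lee_fin ltW.
have := opt_avg_reward_perturb s1 MV MV' D0 diamD.
have := opt_avg_reward_perturb s1 MV' MV D0 diamD'.
by rewrite reward_distC trans_distC ler_norml; lra.
Qed.

End OptimalGain.

Theorem theorem1 (R : realType) (S A : finType) (M : nat -> mdp R S A)
  (s1 : S) (T : nat) (D : R) :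
  (forall t, (1 <= t <= T)%N ->
     [/\ mdp_valid (M t), communicating (M t) & (diameter (M t) <= D%:E)%E]) ->
  var_opt M s1 T <= var_reward M T + D * var_trans M T.
Proof.
move=> HM; rewrite /var_opt /var_reward /var_trans mulr_sumr -big_split /=.
rewrite big_nat_cond [leRHS]big_nat_cond; apply: ler_sum => t /andP[/andP[t1 tT] _].
have [MV' _ diamD'] := HM t.+1 tT.
have t1T : (1 <= t <= T)%N by rewrite t1 ltnW.
have [MV _ diamD] := HM t t1T.
exact: opt_avg_reward_dist.
Qed.
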